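(* Let $\mathbb{F}\in\{\mathbb{R},\mathbb{C}\}$, $A\in\mathbb{F}^{m\times n}$ with $\|A\|_{\infty,col}\le1$, $b\in\mathbb{F}^m$, $\mu>0$, and let $N\ge1$ be an integer with $\beta_N>0$. Let $x'$ be a stationary point of $\mathcal{K}_{reg}$, set $z'=(I-A^*A)x'+A^*b$, and assume $$|z'_i|\notin\Big[\beta_N^2\sqrt{\mu},\ \frac{\sqrt{\mu}}{\beta_N^2}\Big]\quad\text{for all }1\le i\le n.$$ If $2\mu\,\mathrm{card}(x')+\|Ax'-b\|_2^2<\mu N+\mu$, then $x'$ is the unique global minimizer of $\mathcal{K}$ and of $\mathcal{K}_{reg}$.
   Context: $\|A\|_{\infty,col}=\max_i\|a_i\|_2$ over the columns $a_i$ of $A$. $\mathrm{card}(x)$ is the number of nonzero entries; $\beta_k=\inf\{\|Ax\|_2/\|x\|_2:x\ne0,\ \mathrm{card}(x)\le k\}$. $\mathcal{K}(x)=\mu\,\mathrm{card}(x)+\|Ax-b\|_2^2$ and $\mathcal{K}_{reg}(x)=\mathcal{Q}_2(\mu\,\mathrm{card})(x)+\|Ax-b\|_2^2$ with $\mathcal{Q}_2(\mu\,\mathrm{card})(x)=\sum_{j=1}^n\big(\mu-(\max\{\sqrt{\mu}-|x_j|,0\})^2\big)$. $A^*$ is the conjugate transpose. A stationary point of a function $g$ is a point $x$ with $0$ in the Fréchet subdifferential $\hat\partial g(x)$, i.e. the set of $v$ with $\liminf_{y\to x,y\ne x}(g(y)-g(x)-\mathrm{Re}\langle v,y-x\rangle)/\|y-x\|\ge0$.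 *)

From HB Require Import structures.
From mathcomp Require Import all_boot all_order all_algebra.
From mathcomp Require Import classical_sets reals.
From mathcomp.real_closed Require Import complex.
Set Implicit Arguments.
Unset Strict Implicit.
Unset Printing Implicit Defensive.
Import Order.TTheory GRing.Theory Num.Theory.
Local Open Scope ring_scope.

(* The scalar field F is either R (the reals, given as a realType) or R[i].
   It is described by:
     cj : F -> F   the conjugation (identity on R, complex conjugation on R[i]),
     ab : F -> R   the modulus |.|,
     re : F -> R   the real part. *)

Definition nrm2sq (R : realType) (F : numFieldType) (ab : F -> R) (k : nat)
  (v : 'cV[F]_k) : R := \sum_(i < k) ab (v i 0) ^+ 2.
Definition nrm2 (R : realType) (F : numFieldType) (ab : F -> R) (k : nat)
  (v : 'cV[F]_k) : R := Num.sqrt (nrm2sq ab v).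

Definition adj (F : numFieldType) (cj : F -> F) (m n : nat) (A : 'M[F]_(m, n))
  : 'M[F]_(n, m) := map_mx cj A^T.

Definition col_norm_inf (R : realType) (F : numFieldType) (ab : F -> R)
  (m n : nat) (A : 'M[F]_(m, n)) : R :=
  \big[Num.max/0]_(j < n) nrm2 ab (col j A).

Definition card (F : numFieldType) (n : nat) (x : 'cV[F]_n) : nat :=
  #|[set i : 'I_n | x i 0 != 0]|.

Definition beta (R : realType) (F : numFieldType) (ab : F -> R) (m n : nat)
  (A : 'M[F]_(m, n)) (k : nat) : R :=
  inf [set r : R | exists x : 'cV[F]_n,
         [/\ x != 0, (card x <= k)%N & r = nrm2 ab (A *m x) / nrm2 ab x]].

Definition Kfun (R : realType) (F : numFieldType) (ab : F -> R) (m n : nat)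
  (mu : R) (A : 'M[F]_(m, n)) (b : 'cV[F]_m) (x : 'cV[F]_n) : R :=
  mu * (card x)%:R + nrm2 ab (A *m x - b) ^+ 2.

Definition Q2card (R : realType) (F : numFieldType) (ab : F -> R) (n : nat)
  (mu : R) (x : 'cV[F]_n) : R :=
  \sum_(j < n) (mu - (Num.max (Num.sqrt mu - ab (x j 0)) 0) ^+ 2).

Definition Kreg (R : realType) (F : numFieldType) (ab : F -> R) (m n : nat)
  (mu : R) (A : 'M[F]_(m, n)) (b : 'cV[F]_m) (x : 'cV[F]_n) : R :=
  Q2card ab mu x + nrm2 ab (A *m x - b) ^+ 2.

Definition inner_re (R : realType) (F : numFieldType) (cj : F -> F)
  (re : F -> R) (n : nat) (v w : 'cV[F]_n) : R :=
  \sum_(i < n) re (v i 0 * cj (w i 0)).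

(* Frechet subdifferential: v such that
   liminf_{y -> x, y <> x} (g y - g x - Re<v, y - x>) / ||y - x|| >= 0,
   written out with epsilon/delta. *)
Definition frechet_subdiff (R : realType) (F : numFieldType) (cj : F -> F)
  (ab : F -> R) (re : F -> R) (n : nat) (g : 'cV[F]_n -> R) (x : 'cV[F]_n)
  : set 'cV[F]_n :=
  [set v | forall eps : R, 0 < eps -> exists2 delta : R, 0 < delta &
      forall y : 'cV[F]_n, 0 < nrm2 ab (y - x) < delta ->
        - eps * nrm2 ab (y - x) <= g y - g x - inner_re cj re v (y - x)].

Definition stationary (R : realType) (F : numFieldType) (cj : F -> F)
  (ab : F -> R) (re : F -> R) (n : nat) (g : 'cV[F]_n -> R) (x : 'cV[F]_n)
  : Prop := frechet_subdiff cj ab re g x 0.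

Definition unique_global_minimizer (R : realType) (F : numFieldType) (n : nat)
  (g : 'cV[F]_n -> R) (x : 'cV[F]_n) : Prop :=
  forall y : 'cV[F]_n, y != x -> g x < g y.

Definition theorem4p5_claim (R : realType) (F : numFieldType) (cj : F -> F)
  (ab : F -> R) (re : F -> R) : Prop :=
  forall (m n : nat) (A : 'M[F]_(m, n)) (b : 'cV[F]_m) (mu : R) (N : nat)
         (x' : 'cV[F]_n),
    col_norm_inf ab A <= 1 ->
    0 < mu ->
    (1 <= N)%N ->
    0 < beta ab A N ->
    stationary cj ab re (Kreg ab mu A b) x' ->
    (forall z' : 'cV[F]_n,
       z' = (1%:M - adj cj A *m A) *m x' + adj cj A *m b ->
       forall i : 'I_n,
         ~ (beta ab A N ^+ 2 * Num.sqrt mu <= ab (z' i 0)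
              <= Num.sqrt mu / beta ab A N ^+ 2)) ->
    2 * mu * (card x')%:R + nrm2 ab (A *m x' - b) ^+ 2 < mu * N%:R + mu ->
    unique_global_minimizer (Kfun ab mu A b) x' /\
    unique_global_minimizer (Kreg ab mu A b) x'.

From Pilot Require Import Defs.
From HB Require Import structures.
From mathcomp Require Import all_boot all_order all_algebra.
From mathcomp Require Import classical_sets reals.
From mathcomp.real_closed Require Import complex.
From mathcomp Require Import ring lra.
Set Implicit Arguments.
Unset Strict Implicit.
Unset Printing Implicit Defensive.
Import Order.TTheory GRing.Theory Num.Theory.
Local Open Scope ring_scope.

(* Let g = A^*(Ax' - b), so that z' = x' - g.  Testing the Fréchet condition of
   K_reg along single coordinates gives |g_i| <= sqrt mu where x'_i = 0, and
   g_i = -(max (sqrt mu - |x'_i|) 0 / |x'_i|) x'_i elsewhere; the gap assumption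
   on |z'_i| sharpens this to |g_i| < beta_N^2 sqrt mu, resp. to g_i = 0 and
   |x'_i| > sqrt mu / beta_N^2.  In particular K_reg(x') = K(x').
   If K(y) <= K(x'), the budget assumption forces card(y - x') <= N, so
   ||A(y - x')||^2 >= beta_N^2 ||y - x'||^2 and K(y) - K(x') dominates a sum of
   coordinatewise terms, nonnegative and positive where y_i <> x'_i.
   As ||a_i|| <= 1, K_reg is concave in y_i on the segment from y_i = 0 to
   |y_i| = sqrt mu; induction on the number of coordinates with
   0 < |y_i| < sqrt mu thus reduces K_reg(y) >= K(x') to the case K_reg(y) = K(y). *)

Section QuadraticEnvelope.
Variables (R : rcfType) (mu : R).
Hypothesis mu_ge0 : 0 <= mu.
Local Notation s := (Num.sqrt mu).

Definition qenv (t : R) : R := mu - Num.max (s - t) 0 ^+ 2.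

Lemma qenv_below t : t <= s -> qenv t = 2 * s * t - t ^+ 2.
Proof.
move=> ts; rewrite /qenv max_l ?subr_ge0 //.
have := sqr_sqrtr mu_ge0; nra.
Qed.

Lemma qenv_above t : s <= t -> qenv t = mu.
Proof. by move=> st; rewrite /qenv max_r ?subr_le0 // expr0n subr0. Qed.

Lemma qenv0 : qenv 0 = 0.
Proof. by rewrite qenv_below ?sqrtr_ge0 // expr0n mulr0 subr0. Qed.

Lemma qenv_le_lin t : 0 <= t -> qenv t <= 2 * s * t.
Proof.
move=> t_ge0; have s_ge0 := sqrtr_ge0 mu; have s2 := sqr_sqrtr mu_ge0.
have [ts|st] := leP t s; first by rewrite qenv_below //; nra.
have := ler_wpM2l s_ge0 (ltW st).
by rewrite (qenv_above (ltW st)); nra.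
Qed.

Lemma qenv_le_tangent t t0 :
  qenv t <= qenv t0 + 2 * Num.max (s - t0) 0 * (t - t0).
Proof.
have s_ge0 := sqrtr_ge0 mu; have s2 := sqr_sqrtr mu_ge0.
have [t0s|st0] := leP t0 s.
  rewrite max_l ?subr_ge0 // (qenv_below t0s).
  have [ts|st] := leP t s.
    by rewrite (qenv_below ts); have := sqr_ge0 (t - t0); nra.
  have : 0 <= (s - t0) * (t - s) by apply: mulr_ge0; rewrite subr_ge0 // ltW.
  by rewrite (qenv_above (ltW st)); nra.
have -> : Num.max (s - t0) 0 = 0 by rewrite max_r // subr_le0 ltW.
rewrite mulr0 mul0r addr0 (qenv_above (ltW st0)) /qenv.
by have := sqr_ge0 (Num.max (s - t) 0); lra.
Qed.

End QuadraticEnvelope.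

Section RealFacts.
Variable R : realFieldType.

Lemma ge0_of_ray_lower_bound (L M k : R) : 0 < k ->
  (forall eps, 0 < eps -> exists2 d, 0 < d &
     forall h, 0 < h -> h * k < d -> - eps * (h * k) <= h * L + h ^+ 2 * M) ->
  0 <= L.
Proof.
move=> k_gt0 bound; rewrite leNgt; apply/negP => L_lt0.
have k2_gt0 : 0 < 2 * k by rewrite mulr_gt0.
have M2_gt0 : 0 < 2 * (`|M| + 1) by rewrite mulr_gt0 // ltr_wpDl.
have eps_gt0 : 0 < - L / (2 * k) by rewrite divr_gt0 ?oppr_gt0.
have [d d_gt0 hd] := bound _ eps_gt0.
pose h := Num.min (d / (2 * k)) (- L / (2 * (`|M| + 1))).
have h_gt0 : 0 < h by rewrite lt_min !divr_gt0 ?oppr_gt0.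
have : h <= d / (2 * k) by rewrite ge_min lexx.
have : h <= - L / (2 * (`|M| + 1)) by rewrite ge_min lexx orbT.
rewrite !ler_pdivlMr // => hL hd'.
have hk : h * k < d by nra.
have := hd h h_gt0 hk.
have -> : - (- L / (2 * k)) * (h * k) = L * h / 2 by field; rewrite gt_eqF.
move=> {}bound; have := ler_norm M.
have : 0 <= L / 2 + h * M by rewrite -(pmulr_rge0 _ h_gt0); nra.
nra.
Qed.

(* A concave quadratic on [0, l] is bounded below by its values at 0 and l. *)
Lemma concave_quad_ge (c P Q l K : R) : Q <= 0 -> 1 < l ->
  K <= c -> K <= c + l * P + l ^+ 2 * Q ->
  K <= c + P + Q /\ (c + P + Q = K -> c = K).
Proof.
move=> Q_le0 l_gt1 Kc Kl.
have Ql : 0 <= Q * (l * (1 - l)) by apply: mulr_le0 => //; nra.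
have lc : 0 <= (l - 1) * (c - K) by apply: mulr_ge0; rewrite subr_ge0 // ltW.
have lK : K <= c + P + Q by nra.
split=> // eqK; apply: le_anti; rewrite Kc andbT; nra.
Qed.

End RealFacts.

(* Both [R] and [R[i]] satisfy these axioms, [emb] being the embedding of the reals. *)
Section ScalarField.
Variables (R : realType) (F : numFieldType) (cj : F -> F) (ab re : F -> R)
  (emb : R -> F).
Hypotheses (cjD : {morph cj : x y / x + y}) (cjM : {morph cj : x y / x * y})
  (cjK : involutive cj) (cj_emb : forall a, cj (emb a) = emb a)
  (reD : {morph re : x y / x + y})
  (re_embM : forall a x, re (emb a * x) = a * re x)
  (re_cj : forall x, re (cj x) = re x)
  (re_mul_cj : forall x, re (x * cj x) = ab x ^+ 2)
  (re_le_ab : forall x, re x <= ab x)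
  (abM : {morph ab : x y / x * y}) (ab_cj : forall x, ab (cj x) = ab x)
  (ab_emb : forall a, ab (emb a) = `|a|)
  (ab_ge0 : forall x, 0 <= ab x) (ab_eq0 : forall x, ab x = 0 -> x = 0)
  (embD : {morph emb : a b / a + b}) (emb1 : emb 1 = 1).

Lemma re0 : re 0 = 0.
Proof. by apply: (addrI (re 0)); rewrite -reD !addr0. Qed.

Lemma reN x : re (- x) = - re x.
Proof. by apply/eqP; rewrite -subr_eq0 opprK addrC -reD subrr re0. Qed.

Lemma re_sum (I : finType) (f : I -> F) : re (\sum_i f i) = \sum_i re (f i).
Proof. exact: (big_morph _ reD re0). Qed.

Lemma cj0 : cj 0 = 0.
Proof. by apply: (addrI (cj 0)); rewrite -cjD !addr0. Qed.

Lemma cj_sum (I : finType) (f : I -> F) : cj (\sum_i f i) = \sum_i cj (f i).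
Proof. exact: (big_morph _ cjD cj0). Qed.

Lemma emb0 : emb 0 = 0.
Proof. by apply: (addrI (emb 0)); rewrite -embD !addr0. Qed.

Lemma embN a : emb (- a) = - emb a.
Proof. by apply/eqP; rewrite -subr_eq0 opprK addrC -embD subrr emb0. Qed.

Lemma ab0 : ab 0 = 0.
Proof.
by have /esym/eqP := re_mul_cj 0; rewrite mul0r re0 sqrf_eq0 => /eqP.
Qed.

Lemma ab1 : ab 1 = 1.
Proof. by rewrite -emb1 ab_emb normr1. Qed.

Lemma abN x : ab (- x) = ab x.
Proof. by rewrite -mulN1r -emb1 -embN abM ab_emb normrN normr1 mul1r. Qed.

Lemma ab_gt0 x : x != 0 -> 0 < ab x.
Proof.
by move=> x0; rewrite lt_def ab_ge0 andbT; apply: contraNN x0 => /eqP/ab_eq0->.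
Qed.

Lemma re_mul_cjC x y : re (x * cj y) = re (y * cj x).
Proof. by rewrite -re_cj cjM cjK mulrC. Qed.

Lemma re_mul_cj_ge x y : - (ab x * ab y) <= re (x * cj y).
Proof. by rewrite lerNl -reN -mulNr -(abN x) -(ab_cj y) -abM re_le_ab. Qed.

Lemma re_mul_cj_embr a x y : re (x * cj (emb a * y)) = a * re (x * cj y).
Proof. by rewrite cjM cj_emb mulrCA re_embM. Qed.

Lemma ab_addr_sqr x y :
  ab (x + y) ^+ 2 = ab x ^+ 2 + 2 * re (x * cj y) + ab y ^+ 2.
Proof.
by rewrite -re_mul_cj cjD mulrDl !mulrDr !reD !re_mul_cj (re_mul_cjC y x); ring.
Qed.

Local Notation nsq := (nrm2sq ab).
Local Notation ip := (inner_re cj re).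

Lemma nrm2sq_ge0 k (v : 'cV[F]_k) : 0 <= nsq v.
Proof. by apply: sumr_ge0 => i _; rewrite exprn_ge0. Qed.

Lemma nrm2sq_eq0 k (v : 'cV[F]_k) : nsq v = 0 -> v = 0.
Proof.
move=> v0; apply/matrixP => i l; rewrite ord1 mxE.
have /eqP := psumr_eq0P (fun i _ => exprn_ge0 2 (ab_ge0 (v i 0))) v0 (i := i) isT.
by rewrite sqrf_eq0 => /eqP/ab_eq0.
Qed.

Lemma nrm2sq0 k : nsq (0 : 'cV[F]_k) = 0.
Proof. by rewrite /nrm2sq big1 // => i _; rewrite mxE ab0 expr0n. Qed.

Lemma sqr_nrm2 k (v : 'cV[F]_k) : nrm2 ab v ^+ 2 = nsq v.
Proof. by rewrite sqr_sqrtr // nrm2sq_ge0. Qed.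

Lemma nrm2sqD k (v w : 'cV[F]_k) : nsq (v + w) = nsq v + 2 * ip v w + nsq w.
Proof.
rewrite /nrm2sq /inner_re; under eq_bigr do rewrite mxE ab_addr_sqr.
by rewrite !big_split /= -mulr_sumr.
Qed.

Lemma nrm2sqZ k c (v : 'cV[F]_k) : nsq (c *: v) = ab c ^+ 2 * nsq v.
Proof. by rewrite /nrm2sq mulr_sumr; apply: eq_bigr => i _; rewrite mxE abM exprMn. Qed.

Lemma inner_re0l k (w : 'cV[F]_k) : ip 0 w = 0.
Proof. by rewrite /inner_re big1 // => i _; rewrite mxE mul0r re0. Qed.

Lemma inner_re_adj m n (A : 'M[F]_(m, n)) (d : 'cV[F]_n) (r : 'cV[F]_m) :
  ip (A *m d) r = ip d (adj cj A *m r).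
Proof.
rewrite /inner_re.
under eq_bigr do rewrite mxE mulr_suml re_sum.
under [RHS]eq_bigr do rewrite mxE cj_sum mulr_sumr re_sum.
rewrite exchange_big /=; apply: eq_bigr => k _; apply: eq_bigr => i _.
by rewrite /adj !mxE cjM cjK mulrCA mulrA.
Qed.

(* [lsq_grad A b y] is half the gradient of [||A y - b||^2]. *)
Definition lsq_grad m n (A : 'M[F]_(m, n)) (b : 'cV[F]_m) (y : 'cV[F]_n) :=
  adj cj A *m (A *m y - b).

Lemma nrm2sq_residualD m n (A : 'M[F]_(m, n)) (b : 'cV[F]_m) (y e : 'cV[F]_n) :
  nsq (A *m (y + e) - b) =
  nsq (A *m y - b) + 2 * ip e (lsq_grad A b y) + nsq (A *m e).
Proof.
rewrite mulmxDr addrAC [_ + A *m e]addrC nrm2sqD inner_re_adj; ring.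
Qed.

Lemma grad_stepE m n (A : 'M[F]_(m, n)) (b : 'cV[F]_m) (x : 'cV[F]_n) :
  (1%:M - adj cj A *m A) *m x + adj cj A *m b = x - lsq_grad A b x.
Proof. by rewrite /lsq_grad mulmxBl mul1mx mulmxBr mulmxA opprB addrA addrAC. Qed.

Definition single n (j : 'I_n) (u : F) : 'cV[F]_n :=
  \col_i (if i == j then u else 0).

Lemma nrm2sq_single n (j : 'I_n) u : nsq (single j u) = ab u ^+ 2.
Proof.
rewrite /nrm2sq (bigD1 j) //= big1 ?addr0 => [|i /negbTE ij]; rewrite mxE.
  by rewrite eqxx.
by rewrite ij ab0 expr0n.
Qed.

Lemma inner_re_singlel n (j : 'I_n) u w : ip (single j u) w = re (u * cj (w j 0)).
Proof.
rewrite /inner_re (bigD1 j) //= big1 ?addr0 => [|i /negbTE ij]; rewrite mxE.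
  by rewrite eqxx.
by rewrite ij mul0r re0.
Qed.

Lemma card_single n (j : 'I_n) u : u != 0 -> Defs.card (single j u) = 1%N.
Proof.
move=> u0; rewrite /Defs.card -[RHS](cards1 j); apply: eq_card => i.
by rewrite !inE mxE; case: (i == j) => //; rewrite eqxx.
Qed.

Lemma mul_single m n (A : 'M[F]_(m, n)) (j : 'I_n) u : A *m single j u = u *: col j A.
Proof.
apply/matrixP => i l; rewrite !mxE (bigD1 j) //= big1 ?addr0 => [|k /negbTE kj].
  by rewrite mxE eqxx mulrC.
by rewrite mxE kj mulr0.
Qed.

Lemma nrm2sq_col_le1 m n (A : 'M[F]_(m, n)) (j : 'I_n) :
  col_norm_inf ab A <= 1 -> nsq (col j A) <= 1.
Proof.
move=> A1; rewrite -sqr_nrm2.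
have n0 : 0 <= nrm2 ab (col j A) := sqrtr_ge0 _.
have n1 : nrm2 ab (col j A) <= 1.
  exact: le_trans (le_bigmax 0 (fun j => nrm2 ab (col j A)) j) A1.
nra.
Qed.

Lemma natr_card n (x : 'cV[F]_n) :
  (Defs.card x)%:R = \sum_j ((x j 0 != 0)%:R : R).
Proof.
rewrite /Defs.card -sum1_card natr_sum big_mkcond /=.
by apply: eq_bigr => i _; rewrite inE; case: ifP.
Qed.

Lemma card_sub_le n (x y : 'cV[F]_n) :
  (Defs.card (y - x) <= Defs.card y + Defs.card x)%N.
Proof.
rewrite /Defs.card; apply: leq_trans (leq_card_setU _ _).
apply/subset_leq_card/fintype.subsetP => i; rewrite !inE !mxE.
by apply: contraR; rewrite negb_or !negbK => /andP[/eqP-> /eqP->]; rewrite subrr.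
Qed.

Lemma Q2cardE mu n (x : 'cV[F]_n) : Q2card ab mu x = \sum_j qenv mu (ab (x j 0)).
Proof. by []. Qed.

Lemma Q2card_add_single mu n (x : 'cV[F]_n) (j : 'I_n) u :
  Q2card ab mu (x + single j u) =
  Q2card ab mu x - qenv mu (ab (x j 0)) + qenv mu (ab (x j 0 + u)).
Proof.
rewrite !Q2cardE (bigD1 j) //= [in RHS](bigD1 j) //= !mxE eqxx.
rewrite (eq_bigr (fun i => qenv mu (ab (x i 0)))); first by ring.
by move=> i /negbTE ij; rewrite !mxE ij addr0.
Qed.

Lemma Q2card_eq_card mu n (x : 'cV[F]_n) : 0 < mu ->
  (forall j, x j 0 = 0 \/ Num.sqrt mu <= ab (x j 0)) ->
  Q2card ab mu x = mu * (Defs.card x)%:R.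
Proof.
move=> mu_gt0 x_coord; rewrite Q2cardE natr_card mulr_sumr.
apply: eq_bigr => j _.
case: (x_coord j) => [->|sx]; first by rewrite eqxx mulr0 ab0 (qenv0 (ltW mu_gt0)).
rewrite (qenv_above sx); have [xj0|] := eqVneq (x j 0) 0; last by rewrite mulr1.
by move: sx; rewrite xj0 ab0 leNgt sqrtr_gt0 mu_gt0.
Qed.

Lemma Kreg_add_single m n mu (A : 'M[F]_(m, n)) b (y : 'cV[F]_n) j u :
  Kreg ab mu A b (y + single j u) =
  Kreg ab mu A b y + (qenv mu (ab (y j 0 + u)) - qenv mu (ab (y j 0)))
  + 2 * re (u * cj (lsq_grad A b y j 0)) + ab u ^+ 2 * nsq (col j A).
Proof.
rewrite /Kreg !sqr_nrm2 Q2card_add_single nrm2sq_residualD inner_re_singlel.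
by rewrite mul_single nrm2sqZ; ring.
Qed.

Lemma Kreg_ray m n mu (A : 'M[F]_(m, n)) b (y : 'cV[F]_n) j u l :
  0 <= mu -> y j 0 = 0 -> 0 <= l -> l * ab u <= Num.sqrt mu ->
  Kreg ab mu A b (y + single j (emb l * u)) =
  Kreg ab mu A b y
  + l * (2 * Num.sqrt mu * ab u + 2 * re (u * cj (lsq_grad A b y j 0)))
  + l ^+ 2 * (ab u ^+ 2 * nsq (col j A) - ab u ^+ 2).
Proof.
move=> mu_ge0 yj0 l_ge0 lu.
rewrite Kreg_add_single yj0 add0r ab0 qenv0 // subr0 abM ab_emb ger0_norm //.
by rewrite qenv_below // -[emb l * u * _]mulrA re_embM; ring.
Qed.

Lemma beta_sqr_le m n (A : 'M[F]_(m, n)) N (x : 'cV[F]_n) :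
  0 <= beta ab A N -> (Defs.card x <= N)%N ->
  beta ab A N ^+ 2 * nsq x <= nsq (A *m x).
Proof.
move=> beta_ge0 xN; have [->|x0] := eqVneq x 0.
  by rewrite nrm2sq0 mulr0 nrm2sq_ge0.
have nx_gt0 : 0 < nrm2 ab x.
  rewrite sqrtr_gt0 lt_def nrm2sq_ge0 andbT.
  by apply: contraNN x0 => /eqP/nrm2sq_eq0->.
have : beta ab A N <= nrm2 ab (A *m x) / nrm2 ab x.
  apply: ge_inf; last by exists x.
  by exists 0 => r [y [_ _ ->]]; rewrite divr_ge0 ?sqrtr_ge0.
rewrite ler_pdivlMr // -!sqr_nrm2 => le_beta.
have bx_ge0 := mulr_ge0 beta_ge0 (ltW nx_gt0).
have := ler_pM bx_ge0 bx_ge0 le_beta le_beta.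
nra.
Qed.

Lemma beta_le1 m n (A : 'M[F]_(m, n)) N (j : 'I_n) :
  col_norm_inf ab A <= 1 -> (1 <= N)%N -> 0 <= beta ab A N ->
  beta ab A N <= 1.
Proof.
move=> A1 N_ge1 beta_ge0.
have := beta_sqr_le beta_ge0 (leq_trans (eq_leq (card_single j (oner_neq0 F))) N_ge1).
rewrite nrm2sq_single ab1 expr1n mulr1 mul_single scale1r.
by have := nrm2sq_col_le1 j A1; nra.
Qed.

Lemma stationary_slope_ge0 n (g : 'cV[F]_n -> R) (x : 'cV[F]_n) j w (L M : R) :
  stationary cj ab re g x -> w != 0 ->
  (forall h, 0 < h -> g (x + single j (emb h * w)) - g x <= h * L + h ^+ 2 * M) ->
  0 <= L.
Proof.
move=> x_stat w0 upper; apply: (ge0_of_ray_lower_bound (k := ab w) (M := M)).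
  exact: ab_gt0.
move=> eps eps_gt0; have [d d_gt0 hd] := x_stat eps eps_gt0.
exists d => // h h_gt0 hd'.
have step : nrm2 ab (x + single j (emb h * w) - x) = h * ab w.
  rewrite addrC addKr /nrm2 nrm2sq_single abM ab_emb sqrtr_sqr.
  by rewrite !ger0_norm ?mulr_ge0 // ltW.
apply: le_trans (upper h h_gt0).
have := hd (x + single j (emb h * w)); rewrite step inner_re0l subr0; apply.
by rewrite hd' andbT mulr_gt0 // ab_gt0.
Qed.

Section Stationarity.
Variables (m n : nat) (A : 'M[F]_(m, n)) (b : 'cV[F]_m) (mu : R) (x : 'cV[F]_n).
Hypotheses (mu_gt0 : 0 < mu) (x_stat : stationary cj ab re (Kreg ab mu A b) x).
Local Notation s := (Num.sqrt mu).
Local Notation g := (lsq_grad A b x).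

Lemma Kreg_step j w h :
  Kreg ab mu A b (x + single j (emb h * w)) - Kreg ab mu A b x =
  qenv mu (ab (x j 0 + emb h * w)) - qenv mu (ab (x j 0))
  + 2 * h * re (w * cj (g j 0)) + h ^+ 2 * (ab w ^+ 2 * nsq (col j A)).
Proof.
rewrite Kreg_add_single -mulrA re_embM abM ab_emb exprMn real_normK ?num_real //.
ring.
Qed.

Lemma stationary_coord0 j : x j 0 = 0 -> ab (g j 0) <= s.
Proof.
move=> xj0; set G := g j 0; have s_gt0 : 0 < s by rewrite sqrtr_gt0.
have [->|G0] := eqVneq G 0; first by rewrite ab0 ltW.
have G_gt0 := ab_gt0 G0.
suff : 0 <= 2 * s * ab G - 2 * ab G ^+ 2 by nra.
apply: (stationary_slope_ge0 (j := j) (w := - G)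
  (M := ab G ^+ 2 * nsq (col j A)) x_stat).
  by rewrite oppr_eq0.
move=> h h_gt0; rewrite Kreg_step xj0 add0r ab0 (qenv0 (ltW mu_gt0)) subr0.
rewrite abM ab_emb abN (ger0_norm (ltW h_gt0)) -/G mulNr reN re_mul_cj.
have := qenv_le_lin (ltW mu_gt0) (mulr_ge0 (ltW h_gt0) (ab_ge0 G)).
nra.
Qed.

(* Test the Fréchet condition in the direction [-(c x_j + g_j)]. *)
Lemma stationary_coord_neq0 j : x j 0 != 0 ->
  emb (Num.max (s - ab (x j 0)) 0 / ab (x j 0)) * x j 0 + g j 0 = 0.
Proof.
move=> xj0; set G := g j 0; set t0 := ab (x j 0).
set a := Num.max (s - t0) 0; set c := a / t0; set v := emb c * x j 0 + G.
have [//|v0] := eqVneq v 0; exfalso.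
have t0_gt0 : 0 < t0 := ab_gt0 xj0.
have c_ge0 : 0 <= c by rewrite divr_ge0 ?le_max ?lexx ?orbT // ltW.
have ac : a = c * t0 by rewrite /c divfK // gt_eqF.
have v_gt0 := ab_gt0 v0.
set r := re (x j 0 * cj (- v)).
have slope : 2 * c * r + 2 * re (- v * cj G) = - 2 * ab v ^+ 2.
  rewrite /r re_mul_cjC.
  have -> : - 2 * ab v ^+ 2 = 2 * re (- v * cj v).
    by rewrite [in RHS]mulNr reN re_mul_cj; ring.
  by rewrite [in RHS]/v cjD mulrDr reD re_mul_cj_embr; ring.
suff : 0 <= - 2 * ab v ^+ 2 by nra.
rewrite -slope; apply: (stationary_slope_ge0 (j := j) (w := - v)
  (M := c * ab v ^+ 2 + ab v ^+ 2 * nsq (col j A)) x_stat).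
  by rewrite oppr_eq0.
move=> h h_gt0; rewrite Kreg_step abN.
have tangent := qenv_le_tangent (ltW mu_gt0) (ab (x j 0 + emb h * - v)) t0.
set t := ab (x j 0 + emb h * - v) in tangent *.
have t2 : t ^+ 2 = t0 ^+ 2 + 2 * (h * r) + h ^+ 2 * ab v ^+ 2.
  rewrite /t ab_addr_sqr re_mul_cj_embr abM ab_emb abN ger0_norm ?(ltW h_gt0) //.
  by rewrite /t0 /r; ring.
have : 2 * t0 * (t - t0) <= 2 * (h * r) + h ^+ 2 * ab v ^+ 2.
  by have := sqr_ge0 (t - t0); nra.
move/(ler_wpM2l c_ge0); rewrite -/a ac in tangent.
nra.
Qed.

End Stationarity.

Section GapCondition.
Variables (m n : nat) (A : 'M[F]_(m, n)) (b : 'cV[F]_m) (mu : R) (N : nat)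
  (x : 'cV[F]_n).
Local Notation s := (Num.sqrt mu).
Local Notation bt := (beta ab A N).
Local Notation g := (lsq_grad A b x).
Local Notation K := (Kfun ab mu A b).
Local Notation Kr := (Kreg ab mu A b).
Hypotheses (A1 : col_norm_inf ab A <= 1) (mu_gt0 : 0 < mu) (N_ge1 : (1 <= N)%N)
  (beta_gt0 : 0 < bt) (x_stat : stationary cj ab re Kr x)
  (gap : forall i, ~ (bt ^+ 2 * s <= ab (x i 0 - g i 0) <= s / bt ^+ 2)).

Lemma gap_bounds (j : 'I_n) : [/\ bt ^+ 2 <= 1, bt ^+ 2 * s <= s & s <= s / bt ^+ 2].
Proof.
have bt1 : bt ^+ 2 <= 1.
  by rewrite exprn_ile1 ?(beta_le1 j A1 N_ge1) // ltW.
have s_ge0 := sqrtr_ge0 mu; have bt2_gt0 : 0 < bt ^+ 2 by rewrite exprn_gt0.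
by split=> //; [nra | rewrite ler_pdivlMr //; nra].
Qed.

Lemma gap_coord0 j : x j 0 = 0 -> ab (g j 0) < bt ^+ 2 * s.
Proof.
move=> xj0; have [_ _ sbt] := gap_bounds j.
have := @gap j; rewrite xj0 sub0r abN ltNge => gapj; apply/negP => le_gj.
by apply: gapj; rewrite le_gj (le_trans (stationary_coord0 mu_gt0 x_stat xj0)).
Qed.

Lemma gap_coord_neq0 j : x j 0 != 0 -> g j 0 = 0 /\ s / bt ^+ 2 < ab (x j 0).
Proof.
move=> xj0; have [_ bts sbt] := gap_bounds j.
have := stationary_coord_neq0 mu_gt0 x_stat xj0.
set t0 := ab (x j 0); set a := Num.max (s - t0) 0.
move/eqP; rewrite addrC addr_eq0 => /eqP gjE; have := @gap j.
rewrite gjE opprK -[X in X + _]mul1r -emb1 -mulrDl -embD abM ab_emb -/t0.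
have t0_gt0 : 0 < t0 := ab_gt0 xj0.
have a_ge0 : 0 <= a by rewrite le_max lexx orbT.
rewrite ger0_norm ?addr_ge0 ?divr_ge0 // ?(ltW t0_gt0) //.
have [t0s|st0] := ltP t0 s.
  have -> : (1 + a / t0) * t0 = s.
    by rewrite /a max_l ?subr_ge0 ?(ltW t0s) //; field; rewrite gt_eqF.
  by rewrite bts sbt.
have a0 : a = 0 by rewrite /a max_r // subr_le0.
rewrite a0 mul0r addr0 mul1r emb0 mul0r oppr0 ltNge => gapj.
by split=> //; apply/negP => t0le; apply: gapj; rewrite t0le (le_trans bts).
Qed.

Lemma Kreg_eq_Kfun : Kr x = K x.
Proof.
rewrite /Kreg /Kfun Q2card_eq_card // => j.
have [->|xj0] := eqVneq (x j 0) 0; [by left | right].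
have [_ sx] := gap_coord_neq0 xj0; have [_ _ sbt] := gap_bounds j.
exact: ltW (le_lt_trans sbt sx).
Qed.

Lemma Kreg_lt_add_single j u :
  x j 0 = 0 -> u != 0 -> ab u <= s -> Kr x < Kr (x + single j u).
Proof.
move=> xj0 u0 us; have [bt1 _ _] := gap_bounds j.
rewrite Kreg_add_single xj0 add0r ab0 (qenv0 (ltW mu_gt0)) subr0.
rewrite (qenv_below (ltW mu_gt0) us).
have := beta_sqr_le (ltW beta_gt0) (leq_trans (eq_leq (card_single j u0)) N_ge1).
rewrite nrm2sq_single mul_single nrm2sqZ => bt_col.
have u_gt0 := ab_gt0 u0; have gj := gap_coord0 xj0.
have re_ge := re_mul_cj_ge u (g j 0).
have ug : ab u * ab (g j 0) < ab u * (bt ^+ 2 * s) by rewrite ltr_pM2l.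
have : 0 <= (1 - bt ^+ 2) * (ab u * (2 * s - ab u)).
  by apply: mulr_ge0; [rewrite subr_ge0 | apply: mulr_ge0; lra].
nra.
Qed.

Definition excess (y : 'cV[F]_n) j : R :=
  mu * ((y j 0 != 0)%:R - (x j 0 != 0)%:R)
  + 2 * re ((y j 0 - x j 0) * cj (g j 0)) + bt ^+ 2 * ab (y j 0 - x j 0) ^+ 2.

Lemma excess_gt0 (y : 'cV[F]_n) j : y j 0 != x j 0 -> 0 < excess y j.
Proof.
move=> yx; have [bt1 _ _] := gap_bounds j; rewrite /excess.
have s2 := sqr_sqrtr (ltW mu_gt0); have s_gt0 : 0 < s by rewrite sqrtr_gt0.
have bt2_gt0 : 0 < bt ^+ 2 by rewrite exprn_gt0.
have [xj0|xj0] := eqVneq (x j 0) 0.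
  rewrite xj0 in yx *; rewrite !subr0 yx mulr1.
  have y_gt0 := ab_gt0 yx; have gj := gap_coord0 xj0.
  have := re_mul_cj_ge (y j 0) (g j 0).
  have : ab (y j 0) * ab (g j 0) < ab (y j 0) * (bt ^+ 2 * s) by rewrite ltr_pM2l.
  have := mulr_ge0 (ltW bt2_gt0) (sqr_ge0 (ab (y j 0) - s)).
  have : 0 <= (1 - bt ^+ 2) * s ^+ 2 by rewrite mulr_ge0 ?subr_ge0 ?sqr_ge0.
  nra.
have [gj0 xs] := gap_coord_neq0 xj0.
rewrite gj0 cj0 mulr0 re0 mulr0 addr0 /=.
have [->|yj0] := eqVneq (y j 0) 0; last first.
  by rewrite subrr mulr0 add0r mulr_gt0 // exprn_gt0 // ab_gt0 // subr_eq0.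
rewrite /= !sub0r abN mulrN1.
move: xs; rewrite ltr_pdivrMr // => xs.
have : s ^+ 2 < (ab (x j 0) * bt ^+ 2) ^+ 2.
  by have := ltr_pM (ltW s_gt0) (ltW s_gt0) xs xs; nra.
have : (ab (x j 0) * bt ^+ 2) ^+ 2 <= bt ^+ 2 * ab (x j 0) ^+ 2.
  rewrite exprMn mulrC ler_wpM2r ?exprn_ge0 //.
  by rewrite expr2; nra.
nra.
Qed.

Lemma excess_ge0 (y : 'cV[F]_n) j : 0 <= excess y j.
Proof.
have [yx|yx] := eqVneq (y j 0) (x j 0); last exact/ltW/excess_gt0.
by rewrite /excess yx !subrr mulr0 mul0r re0 ab0 expr0n /= !mulr0 !addr0.
Qed.

Lemma sum_excess_le (y : 'cV[F]_n) : (Defs.card (y - x) <= N)%N ->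
  \sum_j excess y j <= K y - K x.
Proof.
move=> yxN; have := beta_sqr_le (ltW beta_gt0) yxN.
have -> : K y = mu * (Defs.card y)%:R + (nsq (A *m x - b)
    + 2 * inner_re cj re (y - x) g + nsq (A *m (y - x))).
  by rewrite /Kfun sqr_nrm2 -nrm2sq_residualD [x + _]addrC subrK.
have -> : \sum_j excess y j =
    mu * ((Defs.card y)%:R - (Defs.card x)%:R)
    + 2 * inner_re cj re (y - x) g + bt ^+ 2 * nsq (y - x).
  rewrite !natr_card /inner_re /nrm2sq -sumrB !mulr_sumr -!big_split /=.
  by apply: eq_bigr => i _; rewrite /excess !mxE.
rewrite /Kfun sqr_nrm2; lra.
Qed.

Hypothesis budget :
  2 * mu * (Defs.card x)%:R + nrm2 ab (A *m x - b) ^+ 2 < mu * N%:R + mu.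

Lemma card_addn_le_of_Kfun_le (y : 'cV[F]_n) : K y <= K x ->
  (Defs.card y + Defs.card x <= N)%N.
Proof.
rewrite /Kfun !sqr_nrm2 => Kyx; have := budget; rewrite sqr_nrm2 => bud.
have r_ge0 := nrm2sq_ge0 (A *m y - b).
suff : mu * (Defs.card y + Defs.card x)%:R < mu * N.+1%:R.
  by rewrite ltr_pM2l // ltr_nat ltnS.
rewrite natrD -addn1 natrD; nra.
Qed.

Lemma Kfun_unique_min : unique_global_minimizer K x.
Proof.
move=> y yx; rewrite ltNge; apply/negP => Kyx.
have yxN := leq_trans (card_sub_le x y) (card_addn_le_of_Kfun_le Kyx).
have [j yxj] : exists j, y j 0 != x j 0.
  apply/existsP; apply: contraNT yx; rewrite negb_exists => /forallP yx.
  by apply/eqP/matrixP => i l; rewrite ord1; apply/eqP; rewrite -[_ == _]negbK yx.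
have : 0 < \sum_j excess y j.
  rewrite (bigD1 j) //= ltr_pwDl ?excess_gt0 //.
  by apply: sumr_ge0 => i _; exact: excess_ge0.
by have := sum_excess_le yxN; lra.
Qed.

Definition mid_coords (y : 'cV[F]_n) : {set 'I_n} :=
  [set i | 0 < ab (y i 0) < s].

Lemma Kreg_ge_of_mid_coords0 (y : 'cV[F]_n) : #|mid_coords y| = 0%N ->
  K x <= Kr y /\ (Kr y = K x -> y = x).
Proof.
move=> mid0; have -> : Kr y = K y.
  rewrite /Kreg /Kfun Q2card_eq_card // => i.
  have [->|yi0] := eqVneq (y i 0) 0; [by left | right].
  have : i \notin mid_coords y by rewrite (cards0_eq mid0) inE.
  by rewrite inE ab_gt0 //= -leNgt.
have [->|yx] := eqVneq y x; first by [].
have Kxy := Kfun_unique_min yx.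
by split=> [|Kyx]; [exact: ltW | move: Kxy; rewrite Kyx ltxx].
Qed.

Lemma mid_coords_card_lt (y z : 'cV[F]_n) j : j \in mid_coords y ->
  z j 0 = 0 \/ ab (z j 0) = s -> (forall i, i != j -> z i 0 = y i 0) ->
  (#|mid_coords z| < #|mid_coords y|)%N.
Proof.
move=> jy zj zi; rewrite (cardsD1 j (mid_coords y)) jy add1n ltnS.
apply/subset_leq_card/fintype.subsetP => i; rewrite !inE.
have [->|ij] := eqVneq i j; last by rewrite zi.
by case: zj => ->; rewrite ?ab0 ltxx // andbF.
Qed.

(* [Kreg] is concave along the segment from [y_j = 0] to [|y_j| = sqrt mu],
   whose endpoints have fewer coordinates in [mid_coords]. *)
Lemma Kreg_ge_of_endpoints (y : 'cV[F]_n) j : j \in mid_coords y ->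
  (forall z : 'cV[F]_n, z j 0 = 0 \/ ab (z j 0) = s ->
     (forall i, i != j -> z i 0 = y i 0) -> K x <= Kr z /\ (Kr z = K x -> z = x)) ->
  K x <= Kr y /\ (Kr y = K x -> y = x).
Proof.
move=> jy endpoints; move: (jy); rewrite inE => /andP[t_gt0 ts].
set u := y j 0 in t_gt0 ts; set t := ab u in t_gt0 ts.
have u0 : u != 0 by apply: contraTneq t_gt0 => u0; rewrite /t u0 ab0 ltxx.
set y0 := y - single j u.
have y0j : y0 j 0 = 0 by rewrite !mxE eqxx subrr.
have y0i i : i != j -> y0 i 0 = y i 0 by move=> /negbTE ij; rewrite !mxE ij subr0.
set l := s / t.
have l_gt1 : 1 < l by rewrite /l ltr_pdivlMr // mul1r.
have l_gt0 : 0 < l := lt_trans ltr01 l_gt1.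
have ltE : l * t = s by rewrite /l divfK // gt_eqF.
set y1 := y0 + single j (emb l * u).
have y1j : ab (y1 j 0) = s.
  by rewrite mxE y0j add0r mxE eqxx abM ab_emb (ger0_norm (ltW l_gt0)) ltE.
have y1i i : i != j -> y1 i 0 = y i 0.
  by move=> ij; rewrite mxE y0i // mxE (negbTE ij) addr0.
have [Ky0 y0x] := endpoints y0 (or_introl y0j) y0i.
have [Ky1 _] := endpoints y1 (or_intror y1j) y1i.
have yE : y = y0 + single j (emb 1 * u) by rewrite emb1 mul1r /y0 subrK.
have t_le_s : 1 * t <= s by rewrite mul1r ltW.
have Kry := Kreg_ray A b (ltW mu_gt0) y0j ler01 t_le_s.
rewrite -yE expr1n !mul1r in Kry.
have lt_le_s : l * t <= s by rewrite ltE.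
rewrite /y1 (Kreg_ray A b (ltW mu_gt0) y0j (ltW l_gt0) lt_le_s) in Ky1.
have Q_le0 : t ^+ 2 * nsq (col j A) - t ^+ 2 <= 0.
  by have := nrm2sq_col_le1 j A1; have := sqr_ge0 t; rewrite subr_le0; nra.
have [Ky KyE] := concave_quad_ge Q_le0 l_gt1 Ky0 Ky1.
rewrite -Kry in Ky KyE; split=> // Kyx.
have y0E := y0x (KyE Kyx).
have xj0 : x j 0 = 0 by rewrite -y0E.
have yxE : y = x + single j u by rewrite -y0E /y0 subrK.
have := Kreg_lt_add_single xj0 u0 (ltW ts).
by rewrite -yxE Kyx Kreg_eq_Kfun ltxx.
Qed.

Lemma Kreg_ge_Kfun (y : 'cV[F]_n) : K x <= Kr y /\ (Kr y = K x -> y = x).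
Proof.
move: (leqnn #|mid_coords y|); move: {2}#|_| => k.
elim: k y => [|k IH] y yk.
  by apply: Kreg_ge_of_mid_coords0; apply/eqP; rewrite -leqn0.
have [mid0|[j jy]] := set_0Vmem (mid_coords y).
  by apply: Kreg_ge_of_mid_coords0; rewrite mid0 cards0.
apply: (Kreg_ge_of_endpoints jy) => z zj zi; apply: IH.
by rewrite -ltnS (leq_trans (mid_coords_card_lt jy zj zi)).
Qed.

Lemma Kreg_unique_min : unique_global_minimizer Kr x.
Proof.
move=> y yx; have [Ky yE] := Kreg_ge_Kfun y.
by rewrite Kreg_eq_Kfun lt_neqAle Ky andbT eq_sym (contra_neq yE yx).
Qed.

End GapCondition.

Lemma theorem4p5_claim_scalar : theorem4p5_claim cj ab re.
Proof.
move=> m n A b mu N x A1 mu_gt0 N_ge1 beta_gt0 x_stat z_gap budget.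
have gap i : ~ (beta ab A N ^+ 2 * Num.sqrt mu <= ab (x i 0 - lsq_grad A b x i 0)
    <= Num.sqrt mu / beta ab A N ^+ 2).
  by have := z_gap _ (esym (grad_stepE A b x)) i; rewrite 2!mxE.
split; [exact: (Kfun_unique_min A1 mu_gt0 N_ge1 beta_gt0 x_stat gap budget)
       | exact: (Kreg_unique_min A1 mu_gt0 N_ge1 beta_gt0 x_stat gap budget)].
Qed.

End ScalarField.

Lemma theorem4p5_claim_real (R : realType) :
  theorem4p5_claim (F := R) id (fun x : R => `|x|) id.
Proof.
apply: (@theorem4p5_claim_scalar R R id (fun x : R => `|x|) id id) => //.
- by move=> x; rewrite /= real_normK ?num_real // expr2.
- exact: ler_norm.
- exact: normrM.
- by move=> x /eqP; rewrite normr_eq0 => /eqP.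
Qed.

Section Complex.
Variable R : realType.
Local Open Scope complex_scope.

Lemma Re_normc (z : R[i]) :
  complex.Re `|z| = Num.sqrt (complex.Re z ^+ 2 + complex.Im z ^+ 2).
Proof. by rewrite normc_def. Qed.

Lemma theorem4p5_claim_complex : theorem4p5_claim (F := R[i]) (@conjc R)
  (fun z : R[i] => complex.Re `|z|) (@complex.Re R).
Proof.
apply: (@theorem4p5_claim_scalar R R[i] (@conjc R) (fun z : R[i] => complex.Re `|z|)
  (@complex.Re R) (real_complex R)).
- exact: rmorphD.
- exact: rmorphM.
- exact: conjcK.
- exact: conjc_real.
- by move=> [a b] [c d].
- by move=> a [c d] /=; rewrite mul0r subr0.
- by move=> [a b].
- move=> [a b]; rewrite Re_normc /= sqr_sqrtr ?addr_ge0 ?sqr_ge0 //.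
  by rewrite mulrN opprK !expr2.
- move=> [a b]; rewrite Re_normc /=; apply: le_trans (ler_norm a) _.
  by rewrite -sqrtr_sqr ler_sqrt ?addr_ge0 ?sqr_ge0 // lerDl sqr_ge0.
- by move=> x y; rewrite normrM !normc_def /= mul0r subr0.
- by move=> [a b]; rewrite !Re_normc /= sqrrN.
- by move=> a; rewrite Re_normc /= expr0n addr0 sqrtr_sqr.
- by move=> z; rewrite Re_normc sqrtr_ge0.
- by move=> z z0; apply/eqP; rewrite -normr_eq0 normc_def -Re_normc z0.
- exact: rmorphD.
- exact: rmorph1.
Qed.

End Complex.

Theorem theorem4p5 (R : realType) :
  theorem4p5_claim (F := R) id (fun x : R => `|x|) id /\
  theorem4p5_claim (F := R[i]) (@conjc R) (fun z : R[i] => complex.Re `|z|)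
    (@complex.Re R).
Proof. by split; [exact: theorem4p5_claim_real | exact: theorem4p5_claim_complex]. Qed.
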